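(* Let $W\le W'\le S_d$ with $|W':W|=2$, let $\lambda\in P_d$, and let $a\ne a_1$ be $W$-orbits in $T_\lambda$ contained in the same $W'$-orbit. Then for every $\chi\in X_W$ that separates $a$ from $a_1$ there exists $\nu\in N'$ such that $\nu\chi$ separates $a_1$ from $a$, and for every $\chi\in X_W$ that separates $a_1$ from $a$ there exists $\nu\in N'$ such that $\nu\chi$ separates $a$ from $a_1$.
   Context: Let $d\ge1$, $[d]=\{1,\dots,d\}$, $P_d$ the set of partitions of $d$. For $\lambda=(\lambda_1\ge\dots\ge\lambda_k>0)\in P_d$ a tabloid of shape $\lambda$ is a sequence $A=(A_1,\dots,A_k)$ of pairwise disjoint subsets of $[d]$ with $|A_i|=\lambda_i$; $T_\lambda$ is their set; $S_d$ acts by $\zeta A=(\zeta(A_1),\dots,\zeta(A_k))$. For $U\le S_d$, $T_{\lambda;U}$ is the set of $U$-orbits in $T_\lambda$. $N$ is the normalizer of $W$ in $S_d$ and $N'$ the intersection of $N$ with the normalizer of $W'$. $X_W$ is the group of one-dimensional complex characters of $W$; $N$ acts on it by $(\nu\chi)(\sigma)=\chi(\nu^{-1}\sigma\nu)$. For $\chi\in X_W$, $T_{\lambda;\chi}$ is the set of $W$-orbits $O_W(A)\subseteq T_\lambda$ such that $\chi\equiv1$ on the stabilizer $W_A$ of $A$ in $W$. For $a,b\in T_{\lambda;W}$, $\chi$ separates $a$ from $b$ if $a\in T_{\lambda;\chi}$ and $b\notin T_{\lambda;\chi}$. *)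

From mathcomp Require Import all_boot all_order all_algebra all_fingroup all_field all_character.
Set Implicit Arguments. Unset Strict Implicit. Unset Printing Implicit Defensive.
Import GRing.Theory Num.Theory.

Definition is_partition (d : nat) (lam : seq nat) : bool :=
  [&& sorted geq lam, all (fun x => 0 < x) lam & sumn lam == d].

Definition tabloid (d : nat) (lam : seq nat) := {ffun 'I_(size lam) -> {set 'I_d}}.

Section Tabloids.
Variables (d : nat) (lam : seq nat).
Local Notation tab := (tabloid d lam).

Definition is_tabloid (A : tab) : bool :=
  [forall i, #|A i| == nth 0 lam i] &&
  [forall i, forall j, (i != j) ==> [disjoint A i & A j]].

Definition tab_act (z : {perm 'I_d}) (A : tab) : tab := [ffun i => z @: A i].

Definition tab_orbit (U : {set {perm 'I_d}}) (A : tab) : {set tab} :=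
  [set tab_act z A | z in U].

Definition tab_stab (U : {set {perm 'I_d}}) (A : tab) : {set {perm 'I_d}} :=
  [set z in U | tab_act z A == A].

Definition is_tab_orbit (U : {set {perm 'I_d}}) (o : {set tab}) : bool :=
  [exists A, is_tabloid A && (o == tab_orbit U A)].

Definition in_Tchi (W : {group {perm 'I_d}}) (chi : 'CF(W)) (o : {set tab}) : bool :=
  [exists A, [&& is_tabloid A, o == tab_orbit W A &
                 [forall z in tab_stab W A, chi z == 1%R]]].

Definition separates (W : {group {perm 'I_d}}) (chi : 'CF(W)) (a b : {set tab}) : bool :=
  in_Tchi chi a && ~~ in_Tchi chi b.
End Tabloids.

(* (nu chi)(sigma) = chi(nu^-1 sigma nu) = (chi ^ nu^-1)%CF sigma *)
Definition char_act (d : nat) (W : {group {perm 'I_d}}) (nu : {perm 'I_d}) (chi : 'CF(W)) : 'CF(W) :=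
  (chi ^ nu^-1)%CF.

Definition Nprime (d : nat) (W W' : {group {perm 'I_d}}) : {set {perm 'I_d}} :=
  ('N(W) :&: 'N(W'))%g.

From mathcomp Require Import all_boot all_order all_algebra all_fingroup all_field all_character.
Set Implicit Arguments. Unset Strict Implicit. Unset Printing Implicit Defensive.
Import GRing.Theory Num.Theory.

(* Write a = W A and a1 = W A1. Both lie in W' A', so A1 = t A for some t in
   W', and t is not in W because a <> a1. As W has index 2 in W', t normalizes
   W and t^2 lies in W. Since the stabilizer of t A in W is the t-conjugate of
   the stabilizer of A, conjugating chi by t exchanges "chi is trivial on W_A"
   and "chi is trivial on W_(tA)"; as t^2 acts trivially on class functions of
   W, the same conjugation also exchanges them back. Hence nu = t turns a
   character separating a from a1 into one separating a1 from a, and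
   conversely. *)

Local Open Scope group_scope.

Lemma index2_expg2 (gT : finGroupType) (G H : {group gT}) (x : gT) :
  H \subset G -> #|G : H| = 2 -> x \in G :\: H -> x ^+ 2 \in H.
Proof.
move=> sHG iHG xGH; have /setDP[Gx notHx] := xGH.
apply: contraNT notHx => notHx2.
have : x ^+ 2 \in H :* x by rewrite (rcoset_index2 sHG iHG xGH) inE notHx2 groupX.
by rewrite expgS expg1 => /rcosetP[h Hh /mulIg ->].
Qed.

Lemma char_act_invol (d : nat) (W : {group {perm 'I_d}}) (t : {perm 'I_d})
    (chi : 'CF(W)) :
  t \in 'N(W) -> t ^+ 2 \in W -> char_act t (char_act t chi) = chi.
Proof.
move=> nWt t2W; rewrite /char_act -cfConjgMnorm ?groupV // -invMg.
by rewrite cfConjg_id // groupV.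
Qed.

Section TabloidAction.
Variables (d : nat) (lam : seq nat).
Local Notation tab := (tabloid d lam).

Lemma tab_actM (x y : {perm 'I_d}) (A : tab) :
  tab_act (x * y) A = tab_act y (tab_act x A).
Proof.
by apply/ffunP => i; rewrite !ffunE -imset_comp; apply: eq_imset => j; rewrite /= permM.
Qed.

Lemma tab_act1 (A : tab) : tab_act 1 A = A.
Proof.
by apply/ffunP => i; rewrite ffunE -[RHS]imset_id; apply: eq_imset => j; rewrite perm1.
Qed.

Lemma is_tabloid_act (z : {perm 'I_d}) (A : tab) :
  is_tabloid (tab_act z A) = is_tabloid A.
Proof.
congr (_ && _); apply: eq_forallb => i.
  by rewrite ffunE card_imset //; apply: perm_inj.
by apply: eq_forallb => j; rewrite !ffunE imset_disjoint //; apply: perm_inj.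
Qed.

Lemma mem_tab_orbit (U : {group {perm 'I_d}}) (A : tab) : A \in tab_orbit U A.
Proof. by apply/imsetP; exists 1; rewrite ?tab_act1. Qed.

Lemma tab_orbit_act (U : {group {perm 'I_d}}) (t : {perm 'I_d}) (A : tab) :
  t \in U -> tab_orbit U (tab_act t A) = tab_orbit U A.
Proof.
move=> Ut; apply/setP => B; apply/imsetP/imsetP => -[z Uz ->].
  by exists (t * z); rewrite ?groupM ?tab_actM.
by exists (t^-1 * z); rewrite ?groupM ?groupV // -tab_actM mulKVg.
Qed.

Lemma tab_orbit_act_witness (U : {group {perm 'I_d}}) (A0 A A1 : tab) :
  A \in tab_orbit U A0 -> A1 \in tab_orbit U A0 ->
  exists2 t, t \in U & A1 = tab_act t A.
Proof.
move=> /imsetP[g Ug ->] /imsetP[h Uh ->].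
by exists (g^-1 * h); rewrite ?groupM ?groupV // -tab_actM mulKVg.
Qed.

Variable W : {group {perm 'I_d}}.

Definition stab_trivial (chi : 'CF(W)) (A : tab) : bool :=
  [forall z in tab_stab W A, chi z == 1%R].

Lemma tab_stab_act (g : {perm 'I_d}) (A : tab) :
  g \in 'N(W) -> tab_stab W (tab_act g A) = tab_stab W A :^ g.
Proof.
move=> nWg; apply/setP => z; rewrite mem_conjg !inE memJ_norm ?groupV //.
congr (_ && _); rewrite /conjg invgK !tab_actM.
apply/eqP/eqP => [-> | fixA]; first by rewrite -tab_actM mulgV tab_act1.
by rewrite -[RHS](congr1 (tab_act g) fixA) -[RHS]tab_actM mulVg tab_act1.
Qed.

Lemma stab_trivial_act (g : {perm 'I_d}) (chi : 'CF(W)) (A : tab) :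
  g \in 'N(W) -> stab_trivial (char_act g chi) A = stab_trivial chi (tab_act g A).
Proof.
move=> nWg; rewrite /stab_trivial tab_stab_act //.
apply/forall_inP/forall_inP => [triv z | triv z sz].
  by rewrite mem_conjg => /triv; rewrite /char_act cfConjgE ?groupV // invgK conjgKV.
by rewrite /char_act cfConjgE ?groupV // invgK triv ?memJ_conjg.
Qed.

Lemma in_Tchi_orbit (chi : 'CF(W)) (A : tab) :
  is_tabloid A -> in_Tchi chi (tab_orbit W A) = stab_trivial chi A.
Proof.
move=> tabA; apply/existsP/idP => [[B /and3P[_ /eqP eAB trivB]] | trivA].
  have /imsetP[w Ww ->] : A \in tab_orbit W B by rewrite -eAB mem_tab_orbit.
  rewrite -stab_trivial_act; last exact: subsetP (normG W) w Ww.
  by rewrite /char_act cfConjg_id ?groupV.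
by exists A; rewrite tabA eqxx.
Qed.

Lemma in_Tchi_char_act (t : {perm 'I_d}) (chi : 'CF(W)) (A : tab) :
  t \in 'N(W) -> is_tabloid A ->
  in_Tchi (char_act t chi) (tab_orbit W A) = in_Tchi chi (tab_orbit W (tab_act t A)).
Proof.
move=> nWt tabA.
by rewrite !in_Tchi_orbit ?is_tabloid_act // stab_trivial_act.
Qed.

Lemma in_Tchi_char_act_back (t : {perm 'I_d}) (chi : 'CF(W)) (A : tab) :
  t \in 'N(W) -> t ^+ 2 \in W -> is_tabloid A ->
  in_Tchi (char_act t chi) (tab_orbit W (tab_act t A)) = in_Tchi chi (tab_orbit W A).
Proof.
move=> nWt t2W tabA.
by rewrite -in_Tchi_char_act // char_act_invol.
Qed.

End TabloidAction.

Theorem corollary9p2p2 (d : nat) (W W' : {group {perm 'I_d}}) (lam : seq nat)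
    (a a1 : {set tabloid d lam}) :
  W \subset W' -> #|W' : W|%g = 2 -> is_partition d lam ->
  is_tab_orbit W a -> is_tab_orbit W a1 -> a != a1 ->
  (exists A', is_tabloid A' && (a \subset tab_orbit W' A') && (a1 \subset tab_orbit W' A')) ->
  (forall chi : 'CF(W), chi \is a linear_char -> separates chi a a1 ->
     exists2 nu, nu \in Nprime W W' & separates (char_act nu chi) a1 a) /\
  (forall chi : 'CF(W), chi \is a linear_char -> separates chi a1 a ->
     exists2 nu, nu \in Nprime W W' & separates (char_act nu chi) a a1).
Proof.
move=> sWW' iWW' _ /existsP[A /andP[tabA /eqP->]] /existsP[A1 /andP[_ /eqP->]].
move=> neq_a [A' /andP[/andP[_ sa] sa1]].
have [t W't eA1] : exists2 t, t \in W' & A1 = tab_act t A.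
  by apply: tab_orbit_act_witness (subsetP sa _ _) (subsetP sa1 _ _);
     apply: mem_tab_orbit.
have tW'W : t \in W' :\: W.
  by rewrite inE W't andbT; apply: contra neq_a => Wt; rewrite eA1 tab_orbit_act.
have nWt : t \in 'N(W).
  exact: subsetP (normal_norm (index2_normal sWW' iWW')) t W't.
have N't : t \in Nprime W W' by rewrite inE nWt (subsetP (normG W')).
have t2W := index2_expg2 sWW' iWW' tW'W.
rewrite eA1; split=> chi _; exists t => //;
  by rewrite /separates in_Tchi_char_act_back // in_Tchi_char_act.
Qed.
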